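(* Let $\varphi$ be a DBI normal formula, let $k\ge1$ and $i_1,\dots,i_k\in\mathcal{A}$ with $i_j\neq i_{j+1}$ for all $j$, and let $\alpha_1,\dots,\alpha_k$ be the unique events of $\mathcal{U}_\varphi$ with $0\,Q^\varphi_{i_1}\alpha_1Q^\varphi_{i_2}\alpha_2\cdots Q^\varphi_{i_k}\alpha_k$. Then for every pointed Kripke model $(\mathcal{M},v)$: $\mathcal{M},v\vDash\widehat{B}_{i_1}\Bigl(\mathsf{pre}^\varphi(\alpha_1)\wedge\widehat{B}_{i_2}\bigl(\mathsf{pre}^\varphi(\alpha_2)\wedge\dots\widehat{B}_{i_k}\mathsf{pre}^\varphi(\alpha_k)\bigr)\Bigr)$ if and only if $\mathcal{M}\odot\mathcal{U}_\varphi,(v,0)\nvDash B_{i_1}\dots B_{i_k}\bot$.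
   Context: Agents $\mathcal{A}=\{1,\dots,n\}$, $n>1$; language $\mathcal{L}$: $\varphi ::= p \mid \neg\varphi \mid (\varphi\wedge\varphi)\mid B_i\varphi$, with $\top,\bot$ as usual and $\widehat{B}_i\varphi:=\neg B_i\neg\varphi$. Kripke model $\mathcal{M}=\langle S,R,V\rangle$ (nonempty $S$, $R_i\subseteq S\times S$, $V:\mathit{Prop}\to 2^S$), standard truth. Action model $\mathcal{U}=\langle E,Q,\mathsf{pre}\rangle$ (nonempty $E$, $Q_i\subseteq E\times E$, $\mathsf{pre}:E\to\mathcal{L}$). Pointed update of $(\mathcal{M},w)$ with $(\mathcal{U},\alpha)$, defined iff $\mathcal{M},w\vDash\mathsf{pre}(\alpha)$: with $T=\{(x,\beta)\in S\times E\mid\mathcal{M},x\vDash\mathsf{pre}(\beta)\}$, $\mathcal{M}\odot\mathcal{U}=\langle S^{\mathcal U},R^{\mathcal U},V^{\mathcal U}\rangle$ where $S^{\mathcal U}$ is the smallest subset of $T$ containing $(w,\alpha)$ closed under: $(x,\beta)\in S^{\mathcal U}$, $(u,\gamma)\in T$, $xR_iu$, $\beta Q_i\gamma$ imply $(u,\gamma)\in S^{\mathcal U}$; $R^{\mathcal U}_i$ relates $(x,\beta),(u,\gamma)\in S^{\mathcal U}$ iff $xR_iu$ and $\beta Q_i\gamma$; $V^{\mathcal U}(p)=\{(x,\beta)\in S^{\mathcal U}\mid x\in V(p)\}$. Target agents: $\mathsf{ta}(p)=\varnothing$, $\mathsf{ta}(\neg\phi)=\mathsf{ta}(\phi)$,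 $\mathsf{ta}(\phi\wedge\psi)=\mathsf{ta}(\phi)\cup\mathsf{ta}(\psi)$, $\mathsf{ta}(B_i\phi)=\{i\}$. DBI formulas: $\varphi ::= B_i\xi \mid B_i(\xi\wedge\varphi)\mid(\varphi\wedge\varphi)\mid B_i\varphi$, $\xi$ purely propositional. DBI normal: $B_i\xi$ always; $B_i\varphi$, $B_i(\xi\wedge\varphi)$ iff $\varphi$ DBI normal and $i\notin\mathsf{ta}(\varphi)$; $\varphi\wedge\psi$ iff both DBI normal and $\mathsf{ta}(\varphi)\cap\mathsf{ta}(\psi)=\varnothing$. Action model $\mathcal{U}_\varphi=\langle E^\varphi,Q^\varphi,\mathsf{pre}^\varphi\rangle$ for DBI normal $\varphi$, recursively; always $E^\varphi=\{0,-1\}\sqcup D^\varphi$, $\varnothing\ne D^\varphi\subseteq\{1,2,\dots\}$, $\mathsf{pre}^\varphi(0)=\mathsf{pre}^\varphi(-1)=\top$; $\underline{Q}_j:=Q_j\cap((E\setminus\{0\})\times(E\setminus\{0\}))$. (1) $\varphi=B_i\xi$: $D=\{m\}$, $\mathsf{pre}(m)=\xi$, $Q_j=\{(0,-1),(m,-1),(-1,-1)\}$ ($j\ne i$), $Q_i=\{(0,m),(m,m),(-1,-1)\}$. (2) $\varphi=B_i\psi$: fresh $m\ge1$, $m\notin D^\psi$; $D^\varphi=D^\psi\sqcup\{m\}$; $\mathsf{pre}^\varphi$ extends $\mathsf{pre}^\psi$ with $\mathsf{pre}^\varphi(m)=\top$; $Q^\varphi_j=\underline{Q}^\psi_j\cup\{(0,-1)\}\cup\{(m,k)\mid(0,k)\in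 Q^\psi_j\}$ ($j\ne i$); $Q^\varphi_i=\underline{Q}^\psi_i\cup\{(0,m),(m,m)\}$. (3) $\varphi=B_i(\xi\wedge\psi)$: as (2) but $\mathsf{pre}^\varphi(m)=\xi$. (4) $\varphi=\psi\wedge\theta$: with $D^\psi\cap D^\theta=\varnothing$, $D^\varphi=D^\psi\sqcup D^\theta$, $\mathsf{pre}^\varphi=\mathsf{pre}^\psi\cup\mathsf{pre}^\theta$, $Q^\varphi_j=\underline{Q}^\psi_j\cup\underline{Q}^\theta_j\cup\{(0,k)\mid(0,k)\in Q^\psi_j\cup Q^\theta_j, k\in D^\psi\sqcup D^\theta\}\cup\{(0,-1)\mid\text{no such }k\text{ exists}\}$. In $\mathcal{U}_\varphi$ every event has exactly one $Q^\varphi_j$-successor for each agent $j$. *)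

From mathcomp Require Import all_boot.
Set Implicit Arguments. Unset Strict Implicit. Unset Printing Implicit Defensive.

Section Logic.
Variable n : nat.
(* Agents {1,...,n} are represented by 'I_n = {0,...,n-1}. *)
Notation agent := 'I_n.

Inductive form : Type :=
| Var of nat
| Neg of form
| And of form & form
| Bel of agent & form.

Definition Top : form := Neg (And (Var 0) (Neg (Var 0))).
Definition Bot : form := Neg Top.
Definition hatB (i : agent) (f : form) : form := Neg (Bel i (Neg f)).

Record kmodel := KModel {
  st : Type;
  kR : agent -> st -> st -> Prop;
  kV : nat -> st -> Prop }.
Arguments kR : clear implicits.
Arguments kV : clear implicits.

Local Unset Implicit Arguments.
Fixpoint sat (M : kmodel) (s : st M) (f : form) : Prop :=
  match f with
  | Var p => kV M p s
  | Neg g => ~ sat M s g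
  | And g h => sat M s g /\ sat M s h
  | Bel i g => forall t, kR M i s t -> sat M t g
  end.

Local Set Implicit Arguments.
Lemma sat_Top (M : kmodel) (s : st M) : sat M s Top.
Proof. by move=> /= [H1 H2]. Qed.

Record amodel := AModel {
  evt : Type;
  aQ : agent -> evt -> evt -> Prop;
  apre : evt -> form }.
Arguments aQ : clear implicits.
Arguments apre : clear implicits.

Section Update.
Variables (M : kmodel) (U : amodel) (w : st M) (alpha : evt U).

Definition inT (p : st M * evt U) : Prop := sat M p.1 (apre U p.2).

Inductive reach : st M * evt U -> Prop :=
| reach0 : inT (w, alpha) -> reach (w, alpha)
| reachS (x u : st M) (b c : evt U) (i : agent) :
    reach (x, b) -> inT (u, c) -> kR M i x u -> aQ U i b c -> reach (u, c).

Definition upd : kmodel :=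
  {| st := {p : st M * evt U | reach p};
     kR := fun i a b => kR M i (sval a).1 (sval b).1 /\ aQ U i (sval a).2 (sval b).2;
     kV := fun p a => kV M p (sval a).1 |}.

Definition upd_pt (H : sat M w (apre U alpha)) : st upd :=
  exist _ (w, alpha) (reach0 H).
End Update.
Arguments upd : clear implicits.

Fixpoint ta (f : form) : {set agent} :=
  match f with
  | Var _ => set0
  | Neg g => ta g
  | And g h => ta g :|: ta h
  | Bel i _ => [set i]
  end.

Fixpoint isProp (f : form) : bool :=
  match f with
  | Var _ => true
  | Neg g => isProp g
  | And g h => isProp g && isProp h
  | Bel _ _ => false
  end.

(* DBI normal formulas (this predicate also enforces the DBI grammar) *)
Fixpoint dbi_normal (f : form) : Prop :=
  match f with
  | Bel i g =>
      isProp g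
      \/ (dbi_normal g /\ i \notin ta g)
      \/ (match g with
          | And xi psi => isProp xi /\ dbi_normal psi /\ i \notin ta psi
          | _ => False
          end)
  | And g h => dbi_normal g /\ dbi_normal h /\ [disjoint ta g & ta h]
  | _ => False
  end.

(* Events of U_phi: 0, -1, and positive integers k (ED k). *)
Inductive ev : Type := E0 | Em1 | ED of nat.

Record adata := AData {
  dD : seq nat;
  dQ : agent -> ev -> ev -> Prop;
  dpre : nat -> form }.

Definition underQ (Q : agent -> ev -> ev -> Prop) (j : agent) (x y : ev) : Prop :=
  Q j x y /\ x <> E0 /\ y <> E0.

Definition maxD (d : adata) : nat := foldr maxn 0 (dD d).

(* case (1): B_i xi, with m = 1 *)
Definition case1 (i : agent) (xi : form) : adata :=
  {| dD := [:: 1];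
     dQ := fun j x y =>
       if j == i then
         (x = E0 /\ y = ED 1) \/ (x = ED 1 /\ y = ED 1) \/ (x = Em1 /\ y = Em1)
       else
         (x = E0 /\ y = Em1) \/ (x = ED 1 /\ y = Em1) \/ (x = Em1 /\ y = Em1);
     dpre := fun k => if k == 1 then xi else Top |}.

(* cases (2) (xi = Top) and (3): fresh m = 1 + max D^psi *)
Definition caseB (i : agent) (xi : form) (d : adata) : adata :=
  let m := (maxD d).+1 in
  {| dD := m :: dD d;
     dQ := fun j x y =>
       if j == i then
         underQ (dQ d) j x y \/ (x = E0 /\ y = ED m) \/ (x = ED m /\ y = ED m)
       else
         underQ (dQ d) j x y \/ (x = E0 /\ y = Em1) \/ (x = ED m /\ dQ d j E0 y);
     dpre := fun k => if k == m then xi else dpre d k |}.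

Definition shev (s : nat) (e : ev) : ev :=
  match e with ED k => ED (s + k) | e => e end.

Definition shift (s : nat) (d : adata) : adata :=
  {| dD := map (addn s) (dD d);
     dQ := fun j x y => exists x0 y0, x = shev s x0 /\ y = shev s y0 /\ dQ d j x0 y0;
     dpre := fun k => if s < k then dpre d (k - s) else Top |}.

(* case (4): D^psi and (renamed) D^theta are disjoint *)
Definition caseAnd (d1 d2' : adata) : adata :=
  let d2 := shift (maxD d1) d2' in
  let D := dD d1 ++ dD d2 in
  {| dD := D;
     dQ := fun j x y =>
       underQ (dQ d1) j x y \/ underQ (dQ d2) j x y
       \/ (x = E0 /\ (exists k, y = ED k /\ k \in D /\ (dQ d1 j E0 y \/ dQ d2 j E0 y)))
       \/ (x = E0 /\ y = Em1 /\
           ~ (exists k, k \in D /\ (dQ d1 j E0 (ED k) \/ dQ d2 j E0 (ED k))));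
     dpre := fun k => if k \in dD d1 then dpre d1 k else dpre d2 k |}.

Definition junk : adata := {| dD := [:: 1]; dQ := fun _ _ _ => False; dpre := fun _ => Top |}.

(* U_phi (meaningful for DBI normal phi) *)
Fixpoint build (f : form) : adata :=
  match f with
  | Bel i g =>
      if isProp g then case1 i g
      else match g with
           | And xi psi => if isProp xi then caseB i xi (build psi)
                           else caseB i Top (build g)
           | _ => caseB i Top (build g)
           end
  | And g h => caseAnd (build g) (build h)
  | _ => junk
  end.

Definition inE (d : adata) (e : ev) : Prop :=
  match e with E0 => True | Em1 => True | ED k => k \in dD d end.

Definition Uphi (f : form) : amodel :=
  let d := build f in
  {| evt := {e : ev | inE d e};
     aQ := fun j a b => dQ d j (sval a) (sval b);
     apre := fun a => match sval a with ED k => dpre d k | _ => Top end |}.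

Definition ev0 (f : form) : evt (Uphi f) := exist _ E0 I.

Definition updPhi_pt (M : kmodel) (f : form) (v : st M) : st (upd M (Uphi f) v (ev0 f)) :=
  @upd_pt M (Uphi f) v (ev0 f) (@sat_Top M v).

Fixpoint qchain (U : amodel) (e : evt U) (ags : seq agent) (es : seq (evt U)) : Prop :=
  match ags, es with
  | [::], [::] => True
  | i :: ags', a :: es' => aQ U i e a /\ qchain a ags' es'
  | _, _ => False
  end.

Fixpoint alternating (l : seq agent) : Prop :=
  match l with
  | i :: ((j :: _) as l') => i != j /\ alternating l'
  | _ => True
  end.

Fixpoint dchain (l : seq (agent * form)) : form :=
  match l with
  | [::] => Top
  | [:: (i, p)] => hatB i p
  | (i, p) :: l' => hatB i (And p (dchain l'))
  end.

Definition boxes (ags : seq agent) (f : form) : form := foldr Bel f ags.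
End Logic.
Arguments sat {n}.
Arguments apre {n}.
Arguments aQ {n}.
Arguments kR {n}.
Arguments kV {n}.
Arguments upd {n}.

(* Every Q^phi_j is a partial function.  This is proved along the recursive
   construction of U_phi, carrying two invariants: edges stay among the events,
   -1 is absorbing and the indices in D^phi are positive (so that the renaming
   in case (4) keeps D^psi and D^theta apart); and a Q_j-edge from 0 into D^phi
   exists only for j in ta(phi), so that in case (4) the disjointness of the
   target agents keeps the 0-edges of the two components from clashing.
   Once the relations are deterministic, a state of M (x) U_phi reached from
   (v, 0) along i_1 ... i_k must carry the events alpha_1 ... alpha_k of the
   chain, and such a state exists exactly when the nested diamonds over the
   preconditions hold at v. *)

From Pilot Require Import Defs.
From mathcomp Require Import all_boot zify.
From Stdlib Require Import Classical.

Ltac split_edges := repeat match goal with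
  | H : _ \/ _ |- _ => destruct H
  | H : _ /\ _ |- _ => destruct H
  | H : exists _, _ |- _ => destruct H
  | H : underQ _ _ _ _ |- _ => destruct H
  end; subst; try congruence.

Section ActionData.
Variable n : nat.
Implicit Types (d : adata n) (S : {set 'I_n}) (f : form n).

Definition wf_adata d :=
  [/\ forall j x y, dQ d j x y -> Defs.inE d x /\ Defs.inE d y,
      forall k, k \in dD d -> 0 < k &
      forall j y, dQ d j Em1 y -> y = Em1].

Definition targets_in d S := forall j k, dQ d j E0 (ED k) -> j \in S.

Definition deterministic d := forall j x y y', dQ d j x y -> dQ d j x y' -> y = y'.

Lemma leq_maxD {d k} : k \in dD d -> k <= maxD d.
Proof.
rewrite /maxD; elim: (dD d) => [|a s IH] //=.
rewrite in_cons => /orP [/eqP ->|/IH H]; first exact: leq_maxl.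
exact: leq_trans H (leq_maxr _ _).
Qed.

Lemma fresh_notin_events d : ~ Defs.inE d (ED (maxD d).+1).
Proof. by move=> /= /leq_maxD; rewrite ltnn. Qed.

Lemma case1_wf i xi : wf_adata (case1 i xi).
Proof.
split=> [j x y|k|j y] /=; last by case: (j == i) => ?; split_edges.
- by case: (j == i) => ?; split_edges.
- by rewrite mem_seq1 => /eqP ->.
Qed.

Lemma case1_targets i xi : targets_in (case1 i xi) [set i].
Proof. by move=> j k /=; case: eqP => [-> _|_ ?]; [rewrite in_set1 | split_edges]. Qed.

Lemma case1_deterministic i xi : deterministic (case1 i xi).
Proof. by move=> j x y y' /=; case: (j == i) => ? ?; split_edges. Qed.

Lemma caseB_wf {i xi d} : wf_adata d -> wf_adata (caseB i xi d).
Proof.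
case=> Hev Hpos Hm1.
have Hsub x : Defs.inE d x -> Defs.inE (caseB i xi d) x.
  by case: x => //= k Hk; rewrite in_cons Hk orbT.
split=> [j x y|k|j y] /=.
- case: (j == i) => ?; split_edges; rewrite /= ?mem_head //;
    by match goal with H : dQ d _ _ _ |- _ =>
         case: (Hev _ _ _ H) => *; split; rewrite //; apply: Hsub end.
- by rewrite inE => /orP [/eqP ->|/Hpos].
- by case: (j == i) => ?; split_edges; eapply Hm1; eassumption.
Qed.

Lemma caseB_targets i xi d : targets_in (caseB i xi d) [set i].
Proof. by move=> j k /=; case: eqP => [-> _|_ ?]; [rewrite in_set1 | split_edges]. Qed.

Lemma caseB_deterministic {i xi d} :
  wf_adata d -> deterministic d -> deterministic (caseB i xi d).
Proof.
case=> Hev _ _ Hdet j x y y' /=.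
have Hfresh := @fresh_notin_events d.
case: (j == i) => ? ?; split_edges;
  try by [ eapply Hdet; eassumption
         | match goal with H : dQ d _ (ED _) _ |- _ => case: Hfresh; case: (Hev _ _ _ H) end ].
Qed.

Lemma shev_inj s : injective (shev s).
Proof. by move=> [||a] [||b] //= [] /addnI ->. Qed.

Lemma shift_wf s {d} : wf_adata d -> wf_adata (shift s d).
Proof.
case=> Hev Hpos Hm1; split=> [j x y|k|j y] /=.
- case=> [[||a] [[||b] [-> [-> /Hev [Ha Hb]]]]]; split=> //=; exact: map_f.
- by case/mapP=> k0 /Hpos Hk0 ->; rewrite addn_gt0 Hk0 orbT.
- by case=> [x0 [y0 [Ex [-> H]]]]; case: x0 Ex H => // _ /Hm1 ->.
Qed.

Lemma shift_targets s {d S} : targets_in d S -> targets_in (shift s d) S.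
Proof.
move=> Ht j k /= [x0 [y0 [Ex [Ey H]]]].
by case: x0 y0 Ex Ey H => [||a] [||b] // _ _ /Ht.
Qed.

Lemma shift_deterministic s {d} : deterministic d -> deterministic (shift s d).
Proof.
move=> Hdet j x y y' /= [x0 [y0 [-> [-> H]]]] [x1 [y1 [/shev_inj <- [-> H']]]].
by rewrite (Hdet _ _ _ _ H H').
Qed.

Lemma shift_maxD_disjoint d1 d2 k :
  wf_adata d2 -> k \in dD d1 -> k \in dD (shift (maxD d1) d2) -> False.
Proof.
case=> _ Hpos _ /leq_maxD Hk /mapP [k0 /Hpos Hk0 Ek].
by move: Hk; rewrite Ek; lia.
Qed.

Lemma caseAnd_wf {d1 d2} : wf_adata d1 -> wf_adata d2 -> wf_adata (caseAnd d1 d2).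
Proof.
move=> [Hev1 Hpos1 Hm11] /(shift_wf (maxD d1)).
rewrite /caseAnd; move: (shift _ d2) => {}d2 [Hev2 Hpos2 Hm12].
set d := (X in wf_adata X).
have Hsub1 x : Defs.inE d1 x -> Defs.inE d x by case: x => //= k Hk; rewrite mem_cat Hk.
have Hsub2 x : Defs.inE d2 x -> Defs.inE d x by case: x => //= k Hk; rewrite mem_cat Hk orbT.
split=> [j x y|k|j y] /=.
- move=> H; split_edges; rewrite ?mem_cat //=;
    by match goal with
       | H : dQ d1 _ _ _ |- _ => case: (Hev1 _ _ _ H) => *; split; apply: Hsub1
       | H : dQ d2 _ _ _ |- _ => case: (Hev2 _ _ _ H) => *; split; apply: Hsub2
       end.
- by rewrite mem_cat => /orP [/Hpos1|/Hpos2].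
- by move=> H; split_edges; [eapply Hm11 | eapply Hm12]; eassumption.
Qed.

Lemma caseAnd_targets {d1 d2 S1 S2} :
  targets_in d1 S1 -> targets_in d2 S2 -> targets_in (caseAnd d1 d2) (S1 :|: S2).
Proof.
move=> Ht1 /(shift_targets (maxD d1)).
rewrite /caseAnd; move: (shift _ d2) => {}d2 Ht2 j k /= H.
by split_edges; rewrite inE; apply/orP; [left; eapply Ht1 | right; eapply Ht2]; eassumption.
Qed.

Lemma caseAnd_deterministic {d1 d2 S1 S2} :
  wf_adata d1 -> wf_adata d2 -> targets_in d1 S1 -> targets_in d2 S2 ->
  [disjoint S1 & S2] -> deterministic d1 -> deterministic d2 ->
  deterministic (caseAnd d1 d2).
Proof.
move=> [Hev1 _ Hm11] Hwf2 Ht1 Ht2 HS Hdet1 Hdet2.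
have Hdisj k := @shift_maxD_disjoint d1 d2 k Hwf2.
have Hwf2s := shift_wf (maxD d1) Hwf2.
have Ht2s := shift_targets (maxD d1) Ht2.
have Hdet2s := shift_deterministic (maxD d1) Hdet2.
rewrite /caseAnd; move: (shift _ d2) Hdisj Hwf2s Ht2s Hdet2s.
move=> {Ht2 Hdet2 Hwf2}d2 Hdisj [Hev2 _ Hm12] Ht2 Hdet2.
have Hagents j : j \in S1 -> j \in S2 -> False.
  by move=> H1 H2; move/pred0P/(_ j): HS; rewrite /= H1 H2.
have Hcross j x y y' : dQ d1 j x y -> dQ d2 j x y' -> x <> E0 -> y = y'.
  case: x => [//||k] H1 H2 _; first by rewrite (Hm11 _ _ H1) (Hm12 _ _ H2).
  by case: (Hdisj k); [case: (Hev1 _ _ _ H1) | case: (Hev2 _ _ _ H2)].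
move=> j x y y' /= H H'; split_edges; first
  [ by eapply Hdet1; eassumption
  | by eapply Hdet2; eassumption
  | by eapply Hcross; eassumption
  | by apply: esym; eapply Hcross; eassumption
  | by case: (Hagents j); [eapply Ht1 | eapply Ht2]; eassumption
  | match goal with Hno : ~ (exists k, _) |- _ => case: Hno end;
    by eexists; split; [eassumption | first [left; eassumption | right; eassumption]] ].
Qed.

Lemma junk_wf : wf_adata (junk n).
Proof. by split=> // k; rewrite mem_seq1 => /eqP ->. Qed.

(* Plain [elim] is too weak: case (3) recurses from [Bel i (And xi psi)]
   directly into [psi]. *)
Lemma build_wf f : wf_adata (build f).
Proof.
move: f; fix IH 1 => -[p|g|g h|i g] /=; try exact: junk_wf.
- exact: caseAnd_wf.
- case: ifP => _; first exact: case1_wf.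
  have IHg := IH g.
  case: g IHg => [p|g|xi psi|j g] IHg; try exact: caseB_wf.
  by case: ifP => _; apply: caseB_wf.
Qed.

Lemma build_targets f : targets_in (build f) (ta f).
Proof.
elim: f => [p|g _|g IHg h IHh|i g _] /=; try by [].
- exact: caseAnd_targets.
- case: ifP => _; first exact: case1_targets.
  by case: g => [p|g|xi psi|j g] /=; try case: ifP => _; exact: caseB_targets.
Qed.

Lemma isProp_not_dbi_normal {f} : isProp f -> ~ dbi_normal f.
Proof. by elim: f => [p _ []|g _ _ []|g IHg h _ /andP [/IHg Hg _] []|]. Qed.

Lemma build_deterministic f : dbi_normal f -> deterministic (build f).
Proof.
move: f; fix IH 1 => -[p|g|g h|i g] //=.
- case=> Hg [Hh HS].
  exact: caseAnd_deterministic (build_wf g) (build_wf h)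
    (build_targets g) (build_targets h) HS (IH g Hg) (IH h Hh).
- case: ifP => [_ _|Hp]; first exact: case1_deterministic.
  have IHg := IH g.
  case: g Hp IHg => [p|g|xi psi|j g] //= Hp IHg Hnorm.
  + by case: Hnorm => [Hg|[[]|[]]] //; rewrite Hg in Hp.
  + case: ifP => Hxi.
    * case: Hnorm => [Hg|[[[Hxi' _] _]|[_ [Hpsi _]]]]; first by rewrite Hg in Hp.
        by case: (isProp_not_dbi_normal Hxi Hxi').
      exact: caseB_deterministic (build_wf psi) (IH psi Hpsi).
    * case: Hnorm => [Hg|[[Hg _]|[Hxi' _]]]; first by rewrite Hg in Hp.
        exact: caseB_deterministic (build_wf (And xi psi)) (IHg Hg).
      by rewrite Hxi' in Hxi.
  + case: Hnorm => [Hg|[[Hg _]|[]]]; first by rewrite Hg in Hp.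
    exact: caseB_deterministic (build_wf (Bel j g)) (IHg Hg).
Qed.
End ActionData.

Lemma inE_irrelevant {n} {d : adata n} {e} (p q : Defs.inE d e) : p = q.
Proof. by case: e p q => [[] []|[] []|k p q] //; exact: eq_irrelevance. Qed.

Lemma Uphi_deterministic {n} {phi : form n} : dbi_normal phi ->
  forall i (a b c : evt (Uphi phi)), aQ (Uphi phi) i a b -> aQ (Uphi phi) i a c -> b = c.
Proof.
move=> /build_deterministic Hdet i a [b Hb] [c Hc] /= Hab Hac.
move: Hc; rewrite -(Hdet _ _ _ _ Hab Hac) => Hc.
by rewrite (inE_irrelevant Hb Hc).
Qed.

Section Satisfaction.
Context {n : nat}.

Lemma sat_Bot (K : kmodel n) s : ~ sat K s (Bot n).
Proof. by apply; apply: sat_Top. Qed.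

Lemma sat_hatB (K : kmodel n) x i f :
  sat K x (hatB i f) <-> exists t, kR K i x t /\ sat K t f.
Proof.
split=> [Hx|[t [Hxt Ht]] Hx]; last exact: Hx t Hxt Ht.
by apply: NNPP => Hno; apply: Hx => t Hxt Ht; apply: Hno; exists t.
Qed.

Lemma not_sat_Bel (K : kmodel n) x i f :
  ~ sat K x (Bel i f) <-> exists t, kR K i x t /\ ~ sat K t f.
Proof.
split=> [Hx|[t [Hxt Ht]] Hx]; last exact/Ht/Hx.
by apply: NNPP => Hno; apply: Hx => t Hxt; apply: NNPP => Ht; apply: Hno; exists t.
Qed.

Lemma sat_dchain_cons (K : kmodel n) x i p l :
  sat K x (dchain ((i, p) :: l)) <->
  exists t, kR K i x t /\ sat K t p /\ sat K t (dchain l).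
Proof.
case: l => [|q l]; rewrite sat_hatB //.
split=> [[t [Hxt Ht]]|[t [Hxt [Ht _]]]]; exists t; do ! split => //.
exact: sat_Top.
Qed.

Context {M : kmodel n} {U : amodel n} {w : st M} {alpha : evt U}.
Hypothesis U_deterministic : forall i a b c, aQ U i a b -> aQ U i a c -> b = c.
Local Notation MU := (upd M U w alpha).

Lemma upd_sat_pre (s : st MU) : sat M (sval s).1 (apre U (sval s).2).
Proof. by case: s => p []. Qed.

Lemma upd_succ {s : st MU} {i a t} :
  aQ U i (sval s).2 a -> kR M i (sval s).1 t -> sat M t (apre U a) ->
  exists2 s' : st MU, kR MU i s s' & sval s' = (t, a).
Proof.
case: s => [[x b] Hs] /= Hba Hxt Ht.
by exists (exist _ (t, a) (reachS Hs Ht Hxt Hba)).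
Qed.

Lemma upd_succ_event {s s' : st MU} {i a} :
  aQ U i (sval s).2 a -> kR MU i s s' -> (sval s').2 = a.
Proof. by move=> Ha [_ Hs']; apply: U_deterministic Hs' Ha. Qed.

Lemma sat_dchain_upd ags es (s : st MU) :
  qchain (sval s).2 ags es ->
  sat M (sval s).1 (dchain (zip ags (map (apre U) es))) <-> ~ sat MU s (boxes ags (Bot n)).
Proof.
elim: ags es s => [|i ags IH] [|a es] s //.
  by move=> _; split=> _; [exact: sat_Bot | exact: sat_Top].
case=> Ha Hch; rewrite [zip _ _]/= [boxes _ _]/= sat_dchain_cons not_sat_Bel.
split=> [[t [Hxt [Ht Hl]]]|[s' [Hss' Hl]]].
- have [s' Hss' Es'] := upd_succ Ha Hxt Ht.
  have Hch' : qchain (sval s').2 ags es by rewrite Es'.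
  by exists s'; split=> //; apply/(IH es s' Hch'); rewrite Es'.
- have Es' := upd_succ_event Ha Hss'.
  have Hch' : qchain (sval s').2 ags es by rewrite Es'.
  exists (sval s').1; split; first exact: Hss'.1.
  by rewrite -Es'; split; [exact: upd_sat_pre | apply/(IH es s' Hch')].
Qed.
End Satisfaction.

Theorem theorem6 (n : nat) (hn : 1 < n) (phi : form n) (Hphi : dbi_normal phi)
  (ags : seq 'I_n) (es : seq (evt (Uphi phi)))
  (Hk : 0 < size ags) (Halt : alternating ags)
  (Hch : qchain (ev0 phi) ags es)
  (M : kmodel n) (v : st M) :
  sat M v (dchain (zip ags (map (apre (Uphi phi)) es)))
  <-> ~ sat (upd M (Uphi phi) v (ev0 phi)) (updPhi_pt phi v) (boxes ags (Bot n)).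
Proof.
exact: sat_dchain_upd (Uphi_deterministic Hphi) ags es (updPhi_pt phi v) Hch.
Qed.
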